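(* For $i=1,2$ let $G_i\subseteq U(n_i)$ be a finite unitary reflection group and $E_i\subseteq\mathbb C^{n_i}$ a good bounded $G_i$-invariant domain. Then $E_1\times E_2\subseteq\mathbb C^{n_1}\times\mathbb C^{n_2}$ is a good $(G_1\times G_2)$-invariant domain, where $G_1\times G_2=\{g_1\oplus g_2: g_i\in G_i\}\subseteq U(n_1+n_2)$.
   Context: A reflection is an element of $U(n)$ of finite order whose fixed point set is a hyperplane (its reflecting hyperplane); a finite unitary reflection group $G$ is a finite subgroup of $U(n)$ generated by reflections; $\mathcal R_G$ is its set of reflecting hyperplanes. A bounded $G$-invariant domain $E$ is good if for every $Y\in\mathcal R_G$, $Y\cap E$ is connected and $Y\cap bE=b_Y(Y\cap E)$, where $b_Y$ denotes the topological boundary relative to $Y$. *)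

From HB Require Import structures.
From mathcomp Require Import all_boot all_order all_algebra.
From mathcomp Require Import all_classical all_reals all_analysis.
From mathcomp Require Import complex.
Import Order.TTheory GRing.Theory Num.Theory numFieldNormedType.Exports.

Set Implicit Arguments.
Unset Strict Implicit.
Unset Printing Implicit Defensive.

Local Open Scope ring_scope.
Local Open Scope classical_set_scope.

(* The complex numbers are R[i] for a real field R : realType; equip R[i]  *)
(* with its canonical (modulus) normed/topological structure, so that       *)
(* C^n = 'cV[R[i]]_n carries the product (= usual Euclidean) topology.      *)
HB.instance Definition _ (R : realType) := NormedModule.copy R[i] (R[i]^o).

Section Defs.
Variable R : realType.
Local Notation C := R[i].

Definition unitary (n : nat) (M : 'M[C]_n) : Prop :=
  M *m (map_mx (fun z : C => z^*) M)^T = 1%:M.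

Definition fixset (n : nat) (g : 'M[C]_n) : set 'cV[C]_n :=
  [set v | g *m v = v].

Definition hyperplane (n : nat) (Y : set 'cV[C]_n) : Prop :=
  exists a : 'rV[C]_n, a != 0 /\ Y = [set v | a *m v = 0].

Definition reflection (n : nat) (g : 'M[C]_n) : Prop :=
  [/\ unitary g,
      (exists k : nat, (0 < k)%N /\ iter k (mulmx g) 1%:M = 1%:M)
    & hyperplane (fixset g)].

Definition finite_reflection_group (n : nat) (G : set 'M[C]_n) : Prop :=
  [/\ finite_set G,
      G 1%:M /\
      (forall g h, G g -> G h -> G (g *m h)),
      (forall g, G g -> exists h, [/\ G h, g *m h = 1%:M & h *m g = 1%:M]),
      (forall g, G g -> unitary g)
    & (forall g, G g -> exists s : seq 'M[C]_n,
          (forall r, r \in s -> G r /\ reflection r) /\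
          g = foldr mulmx 1%:M s)].

Definition reflecting_hyperplanes (n : nat) (G : set 'M[C]_n)
  : set (set 'cV[C]_n) :=
  [set Y | exists g, [/\ G g, reflection g & Y = fixset g]].

Definition domain (n : nat) (E : set 'cV[C]_n) : Prop :=
  [/\ open E, connected E & E !=set0].

Definition bounded_cn (n : nat) (E : set 'cV[C]_n) : Prop :=
  exists M : C, forall v, E v -> forall i, `|v i 0| <= M.

Definition invariant (n : nat) (G : set 'M[C]_n) (E : set 'cV[C]_n) : Prop :=
  forall g v, G g -> E v -> E (g *m v).

Definition tboundary (n : nat) (A : set 'cV[C]_n) : set 'cV[C]_n :=
  [set x | forall U, nbhs x U -> U `&` A !=set0 /\ U `&` ~` A !=set0].

Definition rel_boundary (n : nat) (Y A : set 'cV[C]_n) : set 'cV[C]_n :=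
  [set x | Y x /\ forall U, nbhs x U ->
       U `&` Y `&` A !=set0 /\ U `&` Y `&` ~` A !=set0].

Definition good (n : nat) (G : set 'M[C]_n) (E : set 'cV[C]_n) : Prop :=
  forall Y, reflecting_hyperplanes G Y ->
    connected (Y `&` E) /\ Y `&` tboundary E = rel_boundary Y (Y `&` E).

Definition good_domain (n : nat) (G : set 'M[C]_n) (E : set 'cV[C]_n) : Prop :=
  [/\ domain E, bounded_cn E, invariant G E & good G E].

(* C^{n1} x C^{n2} identified with C^{n1+n2} via column stacking. *)
Definition prod_set (n1 n2 : nat) (E1 : set 'cV[C]_n1) (E2 : set 'cV[C]_n2)
  : set 'cV[C]_(n1 + n2) :=
  [set w | exists u v, [/\ E1 u, E2 v & w = col_mx u v]].

Definition prod_group (n1 n2 : nat) (G1 : set 'M[C]_n1) (G2 : set 'M[C]_n2)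
  : set 'M[C]_(n1 + n2) :=
  [set g | exists g1 g2, [/\ G1 g1, G2 g2 & g = block_mx g1 0 0 g2]].

End Defs.

(* An element g1 (+) g2 of G1 x G2 is a reflection iff one block is a        *)
(* reflection and the other is the identity, since a hyperplane of the form  *)
(* F1 x F2 with F1, F2 linear must have a whole space as one factor. Hence   *)
(* the reflecting hyperplanes of G1 x G2 are the Y1 x C^n2 and C^n1 x Y2,    *)
(* and goodness can be checked factorwise. Connectedness passes to products, *)
(* and for open E the boundary condition Y n bE = b_Y(Y n E) amounts to      *)
(* Y n cl(E) <= cl(Y n E), which passes to products because the closure of   *)
(* a product is the product of the closures.                                 *)

From Pilot Require Import Defs.
From HB Require Import structures.
From mathcomp Require Import all_boot all_order all_algebra.
From mathcomp Require Import all_classical all_reals all_analysis.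
From mathcomp Require Import complex.
Import Order.TTheory GRing.Theory Num.Theory numFieldNormedType.Exports.

Set Implicit Arguments.
Unset Strict Implicit.
Unset Printing Implicit Defensive.

Local Open Scope ring_scope.
Local Open Scope classical_set_scope.

Section ProductReflectionGroup.
Variable R : realType.
Local Notation C := R[i].
Local Notation dsum a b := (block_mx a 0 0 b).

Lemma ball_col_mx n1 n2 (a c : 'cV[C]_n1) (b d : 'cV[C]_n2) e :
  ball (col_mx a b) e (col_mx c d) <-> ball a e c /\ ball b e d.
Proof.
split.
- move=> [e0 H]; split; split=> // i j.
  + by have := H (lshift n2 i) j; rewrite !col_mxEu.
  + by have := H (rshift n1 i) j; rewrite !col_mxEd.
- move=> [[e0 H1] [_ H2]]; split=> // i j.
  by rewrite !mxE; case: splitP => k _; [exact: H1|exact: H2].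
Qed.

Lemma nonexpansive_continuous m n (f : 'cV[C]_m -> 'cV[C]_n) :
  (forall x y e, ball x e y -> ball (f x) e (f y)) -> continuous f.
Proof.
move=> f_ball x; apply/(@cvg_ballP _ _ _ _ (nbhs_filter x)) => e e0.
by apply/nbhs_ballP; exists e => // y /f_ball.
Qed.

Lemma continuous_usubmx n1 n2 : continuous (@usubmx C n1 n2 1).
Proof.
apply: nonexpansive_continuous => x y e.
by rewrite -[x]vsubmxK -[y]vsubmxK !col_mxKu => /ball_col_mx[].
Qed.

Lemma continuous_dsubmx n1 n2 : continuous (@dsubmx C n1 n2 1).
Proof.
apply: nonexpansive_continuous => x y e.
by rewrite -[x]vsubmxK -[y]vsubmxK !col_mxKd => /ball_col_mx[].
Qed.

Lemma continuous_col_mxl n1 n2 (v : 'cV[C]_n2) :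
  continuous (fun u : 'cV[C]_n1 => col_mx u v).
Proof.
apply: nonexpansive_continuous => x y e bxy; apply/ball_col_mx.
by split=> //; apply: ballxx; case: bxy.
Qed.

Lemma continuous_col_mxr n1 n2 (u : 'cV[C]_n1) :
  continuous (fun v : 'cV[C]_n2 => col_mx u v).
Proof.
apply: nonexpansive_continuous => x y e bxy; apply/ball_col_mx.
by split=> //; apply: ballxx; case: bxy.
Qed.

Section ProdSet.
Variables n1 n2 : nat.
Implicit Types (A : set 'cV[C]_n1) (B : set 'cV[C]_n2).

Lemma prod_setE A B : prod_set A B = usubmx @^-1` A `&` dsubmx @^-1` B.
Proof.
apply/seteqP; split => w /=.
- by move=> [u [v [Au Bv ->]]]; rewrite col_mxKu col_mxKd.
- by move=> [Au Bv]; exists (usubmx w), (dsubmx w); rewrite vsubmxK.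
Qed.

Lemma prod_set_col_mx A B u v : prod_set A B (col_mx u v) = (A u /\ B v).
Proof. by rewrite prod_setE /= col_mxKu col_mxKd. Qed.

Lemma prod_setI A A' B B' :
  prod_set A B `&` prod_set A' B' = prod_set (A `&` A') (B `&` B').
Proof. by rewrite !prod_setE setIACA. Qed.

Lemma prod_setS A A' B B' :
  A `<=` A' -> B `<=` B' -> prod_set A B `<=` prod_set A' B'.
Proof. by move=> sA sB; rewrite !prod_setE => w [/sA ? /sB ?]. Qed.

Lemma open_prod_set A B : open A -> open B -> open (prod_set A B).
Proof.
move=> oA oB; rewrite prod_setE.
by apply: openI; apply: open_comp => // x _;
  [exact: continuous_usubmx|exact: continuous_dsubmx].
Qed.

Lemma connected_prod_set A B :
  connected A -> connected B -> connected (prod_set A B).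
Proof.
move=> cA cB.
have [[a0 Aa0]|/set0P/negP/negPn/eqP->] := pselect (A !=set0); last first.
  by rewrite prod_setE preimage_set0 set0I; exact: connected0.
have [[b0 Bb0]|/set0P/negP/negPn/eqP->] := pselect (B !=set0); last first.
  by rewrite prod_setE preimage_set0 setI0; exact: connected0.
have -> : prod_set A B = \bigcup_(a in A)
    ((fun v => col_mx a v) @` B `|` (fun u => col_mx u b0) @` A).
  apply/seteqP; split => w.
  - by move=> [u [v [Au Bv ->]]]; exists u => //; left; exists v.
  - by move=> [a Aa [[v Bv <-]|[u Au <-]]]; [exists a, v|exists u, b0].
apply: bigcup_connected; first by exists (col_mx a0 b0) => a Aa; right; exists a0.
move=> a Aa; apply: connectedU.
- by exists (col_mx a b0); split; [exists b0|exists a].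
- apply: connected_continuous_connected => //.
  exact/continuous_subspaceT/continuous_col_mxr.
- apply: connected_continuous_connected => //.
  exact/continuous_subspaceT/continuous_col_mxl.
Qed.

Lemma closure_prod_set A B :
  closure (prod_set A B) = prod_set (closure A) (closure B).
Proof.
apply/seteqP; split => w.
- move=> clw; rewrite prod_setE; split=> U /=.
  + move=> /continuous_usubmx/clw[z []]; rewrite prod_setE => -[Az _] Uz.
    by exists (usubmx z).
  + move=> /continuous_dsubmx/clw[z []]; rewrite prod_setE => -[_ Bz] Uz.
    by exists (dsubmx z).
- rewrite prod_setE => -[clA clB] U /nbhs_ballP[e e0 sU].
  have [u [Au bu]] := clA _ (nbhsx_ballx (usubmx w) _ e0).
  have [v [Bv bv]] := clB _ (nbhsx_ballx (dsubmx w) _ e0).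
  exists (col_mx u v); split; first by rewrite prod_set_col_mx.
  by apply: sU; rewrite -[w]vsubmxK; exact/ball_col_mx.
Qed.

End ProdSet.

Section Boundary.
Variable n : nat.
Implicit Types Y E : set 'cV[C]_n.

Lemma tboundary_open E : open E -> tboundary E = closure E `\` E.
Proof.
move=> oE; apply/seteqP; split => x.
- move=> bx; split; first by move=> U /bx[[z [Uz Ez]] _]; exists z.
  by move=> Ex; have [_ [z []]] := bx E (open_nbhs_nbhs (conj oE Ex)).
- move=> [clx Ex] U Ux; split; first by have [z [Ez Uz]] := clx U Ux; exists z.
  by exists x; split; first exact: nbhs_singleton.
Qed.

Lemma rel_boundary_open Y E : open E ->
  rel_boundary Y (Y `&` E) = Y `&` (closure (Y `&` E) `\` E).
Proof.
move=> oE; apply/seteqP; split => x.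
- move=> [Yx bx]; split=> //; split.
  + by move=> U /bx[[z [[Uz _] YEz]] _]; exists z.
  + move=> Ex; have [_ [z [[Ez Yz] YEz]]] := bx E (open_nbhs_nbhs (conj oE Ex)).
    exact: YEz.
- move=> [Yx [clx Ex]]; split=> // U Ux; split.
  + by have [z [[Yz Ez] Uz]] := clx U Ux; exists z.
  + by exists x; split; [split=> //; exact: nbhs_singleton|case].
Qed.

Lemma boundary_conditionP Y E : open E ->
  Y `&` tboundary E = rel_boundary Y (Y `&` E) <->
  Y `&` closure E `<=` closure (Y `&` E).
Proof.
move=> oE; rewrite tboundary_open // rel_boundary_open //; split.
- move=> bdE x [Yx clx]; have [Ex|Ex] := pselect (E x).
    exact: subset_closure.
  by have [_ []] : (Y `&` (closure (Y `&` E) `\` E)) x by rewrite -bdE.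
- move=> sYE; apply/seteqP; split => x [Yx [clx Ex]]; split=> //; split=> //.
  + exact: sYE.
  + by apply: closureS clx; apply: subIsetr.
Qed.

Definition good_along Y E :=
  connected (Y `&` E) /\ Y `&` tboundary E = rel_boundary Y (Y `&` E).

Lemma good_along_setT E : open E -> connected E -> good_along setT E.
Proof.
move=> oE cE; split; first by rewrite setTI.
by rewrite (boundary_conditionP _ oE) !setTI.
Qed.

End Boundary.

Lemma good_along_prod_set n1 n2 (Y1 E1 : set 'cV[C]_n1) (Y2 E2 : set 'cV[C]_n2) :
  open E1 -> open E2 -> good_along Y1 E1 -> good_along Y2 E2 ->
  good_along (prod_set Y1 Y2) (prod_set E1 E2).
Proof.
move=> oE1 oE2 [cYE1 /boundary_conditionP-/(_ oE1) sYE1].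
move=> [cYE2 /boundary_conditionP-/(_ oE2) sYE2].
split; first by rewrite prod_setI; exact: connected_prod_set.
apply/boundary_conditionP; first exact: open_prod_set.
by rewrite prod_setI !closure_prod_set prod_setI; exact: prod_setS.
Qed.

Section BlockDiagonal.
Variables n1 n2 : nat.
Implicit Types (a c : 'M[C]_n1) (b d : 'M[C]_n2).

Lemma mulmx_dsum a b c d : dsum a b *m dsum c d = dsum (a *m c) (b *m d).
Proof. by rewrite mulmx_block !mulmx0 !mul0mx !addr0 !add0r. Qed.

Lemma dsum1 : dsum (1%:M : 'M[C]_n1) (1%:M : 'M[C]_n2) = 1%:M.
Proof. by rewrite scalar_mx_block. Qed.

Lemma dsum_inj a b c d : dsum a b = dsum c d -> a = c /\ b = d.
Proof. by move/eq_block_mx => [-> _ _ ->]. Qed.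

Lemma dsum_mul_col_mx a b (u : 'cV[C]_n1) (v : 'cV[C]_n2) :
  dsum a b *m col_mx u v = col_mx (a *m u) (b *m v).
Proof. by rewrite mul_block_col !mul0mx addr0 add0r. Qed.

Lemma iter_mulmx_dsum a b k :
  iter k (mulmx (dsum a b)) 1%:M =
  dsum (iter k (mulmx a) 1%:M) (iter k (mulmx b) 1%:M).
Proof. by elim: k => [|k IHk] /=; rewrite ?dsum1 // IHk mulmx_dsum. Qed.

Lemma unitary_dsum a b : unitary (dsum a b) <-> unitary a /\ unitary b.
Proof.
rewrite /unitary map_block_mx tr_block_mx !map_mx0 !trmx0 mulmx_dsum -dsum1.
by split=> [/dsum_inj|[-> ->]].
Qed.

Lemma fixset_dsum a b :
  Defs.fixset (dsum a b) = prod_set (Defs.fixset a) (Defs.fixset b).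
Proof.
rewrite prod_setE; apply/seteqP; split => w;
  rewrite /Defs.fixset /= -[w]vsubmxK dsum_mul_col_mx col_mxKu col_mxKd.
- by move/eq_col_mx.
- by move=> [-> ->].
Qed.

Lemma foldr_mulmx_dsuml a b (s : seq 'M[C]_n1) :
  foldr mulmx (dsum a b) [seq dsum r 1%:M | r <- s] = dsum (foldr mulmx a s) b.
Proof. by elim: s => [|r s IHs] //=; rewrite IHs mulmx_dsum mul1mx. Qed.

Lemma foldr_mulmx_dsumr a b (s : seq 'M[C]_n2) :
  foldr mulmx (dsum a b) [seq dsum 1%:M r | r <- s] = dsum a (foldr mulmx b s).
Proof. by elim: s => [|r s IHs] //=; rewrite IHs mulmx_dsum mul1mx. Qed.

End BlockDiagonal.

Lemma unitary1 n : unitary (1%:M : 'M[C]_n).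
Proof. by rewrite /unitary map_mx1 trmx1 mul1mx. Qed.

Lemma iter_mul1mx n k (x : 'M[C]_n) : iter k (mulmx 1%:M) x = x.
Proof. by elim: k => //= k ->; exact: mul1mx. Qed.

Lemma fixset_eqT n (g : 'M[C]_n) : Defs.fixset g = setT <-> g = 1%:M.
Proof.
split=> [gT|->]; last by apply/seteqP; split=> // u _; exact: mul1mx.
apply/matrixP => i j.
have : Defs.fixset g (delta_mx j 0) by rewrite gT.
by move/matrixP/(_ i 0); rewrite -colE !mxE andbT eq_sym.
Qed.

Lemma rV_neq0_mulmx_eq1 n (a : 'rV[C]_n) : a != 0 -> exists u, a *m u = 1%:M.
Proof.
move=> a0; have [j aj0] : exists j, a 0 j != 0.
  apply/existsP; apply: contraR a0 => /existsPn a_eq0.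
  by apply/eqP/matrixP => i k; rewrite ord1 mxE; apply/eqP/negPn.
exists ((a 0 j)^-1 *: delta_mx j 0); rewrite -scalemxAr -colE.
by apply/matrixP => i k; rewrite !ord1 !mxE mulVf.
Qed.

(* If both halves of the defining form (a1, a2) were nonzero, then (u, -v)   *)
(* with a1 u = a2 v = 1 would lie in the hyperplane although A u fails.       *)
Lemma hyperplane_prod_set n1 n2 (A : set 'cV[C]_n1) (B : set 'cV[C]_n2) :
  A 0 -> B 0 ->
  hyperplane (prod_set A B) <->
  (hyperplane A /\ B = setT) \/ (A = setT /\ hyperplane B).
Proof.
move=> A0 B0; split; last first.
  case=> [[[a [a0 ->]] ->]|[-> [a [a0 ->]]]].
  - exists (row_mx a 0); split; first by rewrite row_mx_eq0 negb_and a0.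
    rewrite prod_setE preimage_setT setIT; apply/seteqP.
    by split=> w; rewrite /= -[w]vsubmxK mul_row_col col_mxKu mul0mx addr0.
  - exists (row_mx 0 a); split; first by rewrite row_mx_eq0 negb_and a0 orbT.
    rewrite prod_setE preimage_setT setTI; apply/seteqP.
    by split=> w; rewrite /= -[w]vsubmxK mul_row_col col_mxKd mul0mx add0r.
move=> [a [a0 prod_ker]].
have [a1 [a2 a_split]] : exists a1 a2, a = row_mx a1 a2.
  by exists (lsubmx a), (rsubmx a); rewrite hsubmxK.
have ker_col u v : A u /\ B v <-> a1 *m u + a2 *m v = 0.
  by rewrite -prod_set_col_mx prod_ker /= a_split mul_row_col.
have kerA : A = [set u | a1 *m u = 0].
  by apply/seteqP; split=> u; have := ker_col u 0; rewrite mulmx0 addr0 /=; tauto.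
have kerB : B = [set v | a2 *m v = 0].
  by apply/seteqP; split=> v; have := ker_col 0 v; rewrite mulmx0 add0r /=; tauto.
have [a1_0|a1_neq0] := eqVneq a1 0.
  right; split; first by rewrite kerA a1_0; apply/seteqP; split=> // u; rewrite /= mul0mx.
  exists a2; split=> //; apply: contraNneq a0 => a2_0.
  by rewrite a_split a1_0 a2_0 row_mx0.
have [a2_0|a2_neq0] := eqVneq a2 0.
  left; split; first by exists a1.
  by rewrite kerB a2_0; apply/seteqP; split=> // v; rewrite /= mul0mx.
have [u a1u] := rV_neq0_mulmx_eq1 a1_neq0.
have [v a2v] := rV_neq0_mulmx_eq1 a2_neq0.
have [] : A u /\ B (- v) by apply/ker_col; rewrite mulmxN a1u a2v subrr.
by rewrite kerA /= a1u; move/eqP; rewrite oner_eq0.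
Qed.

Lemma reflection_dsum n1 n2 (g1 : 'M[C]_n1) (g2 : 'M[C]_n2) :
  reflection (dsum g1 g2) <->
  (reflection g1 /\ g2 = 1%:M) \/ (g1 = 1%:M /\ reflection g2).
Proof.
have fixset0 n (g : 'M[C]_n) : Defs.fixset g 0 by rewrite /Defs.fixset /= mulmx0.
split.
- move=> [/unitary_dsum[u1 u2] [k [k0]]].
  rewrite iter_mulmx_dsum -dsum1 => /dsum_inj[it1 it2].
  rewrite fixset_dsum => /hyperplane_prod_set-/(_ (fixset0 _ _) (fixset0 _ _)).
  case=> [[h1 /fixset_eqT ->]|[/fixset_eqT -> h2]]; [left|right].
  + by split=> //; split=> //; exists k.
  + by split=> //; split=> //; exists k.
- case=> [[[u1 [k [k0 it1]] h1] ->]|[-> [u2 [k [k0 it2]] h2]]]; split.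
  + by apply/unitary_dsum; split=> //; exact: unitary1.
  + by exists k; rewrite iter_mulmx_dsum it1 iter_mul1mx dsum1.
  + rewrite fixset_dsum; apply/hyperplane_prod_set; try exact: fixset0.
    by left; split=> //; exact/fixset_eqT.
  + by apply/unitary_dsum; split=> //; exact: unitary1.
  + by exists k; rewrite iter_mulmx_dsum it2 iter_mul1mx dsum1.
  + rewrite fixset_dsum; apply/hyperplane_prod_set; try exact: fixset0.
    by right; split=> //; exact/fixset_eqT.
Qed.

Section ProductGroup.
Variables n1 n2 : nat.
Variables (G1 : set 'M[C]_n1) (G2 : set 'M[C]_n2).

Lemma finite_reflection_group_prod :
  finite_reflection_group G1 -> finite_reflection_group G2 ->
  finite_reflection_group (prod_group G1 G2).
Proof.
move=> [fin1 [one1 mul1] inv1 unit1 gen1] [fin2 [one2 mul2] inv2 unit2 gen2].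
split.
- have -> : prod_group G1 G2 = (fun g => dsum g.1 g.2) @` (G1 `*` G2).
    apply/seteqP; split=> g.
    + by move=> [g1 [g2 [G1g1 G2g2 ->]]]; exists (g1, g2).
    + by move=> [[g1 g2] [G1g1 G2g2] <-]; exists g1, g2.
  exact/finite_image/finite_setX.
- split; first by exists 1%:M, 1%:M; rewrite dsum1.
  move=> _ _ [g1 [g2 [G1g1 G2g2 ->]]] [h1 [h2 [G1h1 G2h2 ->]]].
  by exists (g1 *m h1), (g2 *m h2); rewrite mulmx_dsum; split; auto.
- move=> _ [g1 [g2 [G1g1 G2g2 ->]]].
  have [h1 [G1h1 gh1 hg1]] := inv1 _ G1g1.
  have [h2 [G2h2 gh2 hg2]] := inv2 _ G2g2.
  exists (dsum h1 h2); rewrite !mulmx_dsum gh1 hg1 gh2 hg2 dsum1.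
  by split=> //; exists h1, h2.
- move=> _ [g1 [g2 [G1g1 G2g2 ->]]].
  by apply/unitary_dsum; split; [exact: unit1|exact: unit2].
- move=> _ [g1 [g2 [G1g1 G2g2 ->]]].
  have [s1 [refl_s1 ->]] := gen1 _ G1g1.
  have [s2 [refl_s2 ->]] := gen2 _ G2g2.
  exists ([seq dsum r 1%:M | r <- s1] ++ [seq dsum 1%:M r | r <- s2]); split.
  + move=> r; rewrite mem_cat => /orP[/mapP[r1 /refl_s1[G1r1 r1_refl] ->]|
                                      /mapP[r2 /refl_s2[G2r2 r2_refl] ->]].
    * by split; [exists r1, 1%:M|apply/reflection_dsum; left].
    * by split; [exists 1%:M, r2|apply/reflection_dsum; right].
  + by rewrite foldr_cat -dsum1 foldr_mulmx_dsumr foldr_mulmx_dsuml.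
Qed.

Lemma reflecting_hyperplanes_prod Y :
  reflecting_hyperplanes (prod_group G1 G2) Y ->
  (exists2 Y1, reflecting_hyperplanes G1 Y1 & Y = prod_set Y1 setT) \/
  (exists2 Y2, reflecting_hyperplanes G2 Y2 & Y = prod_set setT Y2).
Proof.
move=> [_ [[g1 [g2 [G1g1 G2g2 ->]]] /reflection_dsum g_refl ->]].
rewrite fixset_dsum.
case: g_refl => [[g1_refl ->]|[-> g2_refl]].
- left; exists (Defs.fixset g1); first by exists g1.
  by congr prod_set; exact/fixset_eqT.
- right; exists (Defs.fixset g2); first by exists g2.
  by congr prod_set; exact/fixset_eqT.
Qed.

Variables (E1 : set 'cV[C]_n1) (E2 : set 'cV[C]_n2).

Lemma domain_prod_set : domain E1 -> domain E2 -> domain (prod_set E1 E2).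
Proof.
move=> [oE1 cE1 [x1 E1x1]] [oE2 cE2 [x2 E2x2]]; split.
- exact: open_prod_set.
- exact: connected_prod_set.
- by exists (col_mx x1 x2); rewrite prod_set_col_mx.
Qed.

Lemma bounded_prod_set :
  bounded_cn E1 -> bounded_cn E2 -> bounded_cn (prod_set E1 E2).
Proof.
move=> [M1 bnd1] [M2 bnd2]; exists (`|M1| + `|M2|) => w.
rewrite prod_setE => -[E1w E2w] i; rewrite -[w]vsubmxK mxE.
case: splitP => j _.
- have le1 := bnd1 _ E1w j; have M1_ge0 : 0 <= M1 by exact: le_trans le1.
  by apply: le_trans le1 _; rewrite ger0_norm // lerDl.
- have le2 := bnd2 _ E2w j; have M2_ge0 : 0 <= M2 by exact: le_trans le2.
  by apply: le_trans le2 _; rewrite (ger0_norm M2_ge0) lerDr.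
Qed.

Lemma invariant_prod_set : Defs.invariant G1 E1 -> Defs.invariant G2 E2 ->
  Defs.invariant (prod_group G1 G2) (prod_set E1 E2).
Proof.
move=> inv1 inv2 _ w [g1 [g2 [G1g1 G2g2 ->]]]; rewrite !prod_setE => -[E1w E2w].
rewrite /= -[w]vsubmxK dsum_mul_col_mx col_mxKu col_mxKd.
by split; [exact: inv1|exact: inv2].
Qed.

Lemma good_prod_set : open E1 -> open E2 -> connected E1 -> connected E2 ->
  good G1 E1 -> good G2 E2 -> good (prod_group G1 G2) (prod_set E1 E2).
Proof.
move=> oE1 oE2 cE1 cE2 good1 good2 Y /reflecting_hyperplanes_prod.
case=> [[Y1 /good1 good_Y1 ->]|[Y2 /good2 good_Y2 ->]].
- by apply: good_along_prod_set => //; exact: good_along_setT.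
- by apply: good_along_prod_set => //; exact: good_along_setT.
Qed.

Lemma good_domain_prod_set : good_domain G1 E1 -> good_domain G2 E2 ->
  good_domain (prod_group G1 G2) (prod_set E1 E2).
Proof.
move=> [dom1 bnd1 inv1 good1] [dom2 bnd2 inv2 good2]; split.
- exact: domain_prod_set.
- exact: bounded_prod_set.
- exact: invariant_prod_set.
- by case: dom1 dom2 => [oE1 cE1 _] [oE2 cE2 _]; exact: good_prod_set.
Qed.

End ProductGroup.
End ProductReflectionGroup.

Unset Implicit Arguments.
Set Strict Implicit.

Theorem proposition4p5 (R : realType) (n1 n2 : nat)
  (G1 : set 'M[R[i]]_n1) (G2 : set 'M[R[i]]_n2)
  (E1 : set 'cV[R[i]]_n1) (E2 : set 'cV[R[i]]_n2) :
  finite_reflection_group G1 -> finite_reflection_group G2 ->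
  good_domain G1 E1 -> good_domain G2 E2 ->
  finite_reflection_group (prod_group G1 G2) /\
  good_domain (prod_group G1 G2) (prod_set E1 E2).
Proof.
move=> frg1 frg2 good1 good2; split.
- exact: finite_reflection_group_prod.
- exact: good_domain_prod_set.
Qed.
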